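(* In the iAPG setting described in the context, assume $\mu>0$ and let $\kappa=\frac{L_g}{\gamma_{\mathrm{dec}}\mu}$. For any $c\in[0,1)$ define $\psi_k=F(x^{(k)})-F^*+(1-(1-c)\alpha_k)\frac{\gamma_k}{2}\|x^*-z^{(k)}\|^2$ for $k\ge0$. Then for all $k\ge0$, $$\psi_{k+1}\le\prod_{j=0}^k(1-c\alpha_j)\Big(\psi_0+\frac{\sqrt\kappa}{2(1-c)^2\underline L}\sum_{t=0}^k\frac{\varepsilon_t^2}{\prod_{j=0}^{t-1}(1-c\alpha_j)}\Big),$$ with the convention that an empty product equals $1$. Moreover, if in addition $\varepsilon_k=0$ for all $k$, then for all $k\ge0$, $$F(x^{(k+1)})-F^*+\frac{\gamma_{k+1}}2\|x^*-z^{(k+1)}\|^2\le\Big(1-\sqrt{1/\kappa}\Big)^{k+1}\Big(F(x^{(0)})-F^*+\frac{\gamma_0}{2}\|x^*-z^{(0)}\|^2\Big).$$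
   Context: iAPG setting. Let $g,h:\mathbb R^n\to\mathbb R$ and $r:\mathbb R^n\to\mathbb R\cup\{+\infty\}$, where $g$ is convex, $\mu$-strongly convex for some $\mu\ge0$, and differentiable with $L_g$-Lipschitz gradient ($L_g>0$); $h$ is convex and differentiable with $L_h$-Lipschitz gradient; $r$ is proper, closed and convex. Put $H=h+r$, $F=g+H$, and assume $F$ attains its minimum value $F^*$ at some point $x^*$. Fix constants $\gamma_{\mathrm{dec}}\in(0,1)$ and $\underline L>0$ with $\mu\le\underline L\le L_g$. We consider points $x^{(k)},z^{(k)},y^{(k)}\in\mathbb R^n$ and scalars $\eta_k>0,\alpha_k>0,\gamma_k>0,\varepsilon_k\ge0$ ($k\ge0$) such that $x^{(0)}=z^{(0)}\in\mathrm{dom}(H)$, $\gamma_0\ge\mu$, and for every $k\ge0$: (i) $\gamma_{\mathrm{dec}}/L_g<\eta_k\le1/\underline L$; (ii) $\gamma_{k+1}=\alpha_k^2/\eta_k=(1-\alpha_k)\gamma_k+\alpha_k\mu$; (iii) $y^{(k)}=\frac{1}{\alpha_k\gamma_k+\gamma_{k+1}}\big(\alpha_k\gamma_k z^{(k)}+\gamma_{k+1}x^{(k)}\big)$; (iv) $\mathrm{dist}\big(0,\ \nabla g(y^{(k)})+\tfrac1{\eta_k}(x^{(k+1)}-y^{(k)})+\partial H(x^{(k+1)})\big)\le\varepsilon_k$; (v) $g(x^{(k+1)})\le g(y^{(k)})+\langle\nabla g(y^{(k)}),x^{(k+1)}-y^{(k)}\rangle+\frac1{2\eta_k}\|x^{(k+1)}-y^{(k)}\|^2$;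 (vi) $z^{(k+1)}=x^{(k)}+\frac1{\alpha_k}(x^{(k+1)}-x^{(k)})$. Here $\partial$ denotes the convex subdifferential and $\mathrm{dist}(0,S)=\inf_{s\in S}\|s\|$. *)

From mathcomp Require Import all_boot all_order all_algebra.
From mathcomp Require Import reals.
Set Implicit Arguments. Unset Strict Implicit. Unset Printing Implicit Defensive.
Import Order.TTheory GRing.Theory Num.Theory.
Local Open Scope ring_scope.

Section Defs.
Variables (R : realType) (n : nat).
Local Notation vec := 'rV[R]_n.

Definition dot (u v : vec) : R := \sum_(i < n) u ord0 i * v ord0 i.
Definition enorm (u : vec) : R := Num.sqrt (dot u u).

Definition is_gradient (f : vec -> R) (df : vec -> vec) : Prop :=
  forall x : vec, forall eps : R, 0 < eps -> exists delta : R, 0 < delta /\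
    forall h : vec, enorm h < delta ->
      `|f (x + h) - f x - dot (df x) h| <= eps * enorm h.

Definition convex_set (D : vec -> Prop) : Prop :=
  forall x y (t : R), D x -> D y -> 0 <= t <= 1 -> D (t *: x + (1 - t) *: y).

Definition convex_on (D : vec -> Prop) (f : vec -> R) : Prop :=
  convex_set D /\
  forall x y (t : R), D x -> D y -> 0 <= t <= 1 ->
    f (t *: x + (1 - t) *: y) <= t * f x + (1 - t) * f y.

Definition strongly_convex (mu : R) (f : vec -> R) : Prop :=
  forall x y (t : R), 0 <= t <= 1 ->
    f (t *: x + (1 - t) *: y) <=
      t * f x + (1 - t) * f y - mu / 2 * t * (1 - t) * (enorm (x - y)) ^+ 2.

Definition lipschitz (L : R) (G : vec -> vec) : Prop :=
  forall x y, enorm (G x - G y) <= L * enorm (x - y).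

(* An extended-valued function r : R^n -> R U {+oo} is represented by its
   effective domain D and its (real) values on D; r = +oo outside D.
   Closedness = closed epigraph {(x,a) | x in D, r x <= a}. *)
Definition closed_epigraph (D : vec -> Prop) (r : vec -> R) : Prop :=
  forall x (a : R),
    (forall eps : R, 0 < eps -> exists y (b : R),
        D y /\ r y <= b /\ enorm (y - x) < eps /\ `|b - a| < eps) ->
    D x /\ r x <= a.

Definition proper_closed_convex (D : vec -> Prop) (r : vec -> R) : Prop :=
  (exists x, D x) /\ convex_on D r /\ closed_epigraph D r.

(* convex subdifferential of the extended-valued function with domain D and
   values H on D (empty outside D) *)
Definition subdiff (D : vec -> Prop) (H : vec -> R) (x s : vec) : Prop :=
  D x /\ forall y, D y -> H x + dot s (y - x) <= H y.

(* dist(0, S) <= e, i.e. inf_{s in S} ||s|| <= e (inf of the empty set = +oo) *)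
Definition dist0_le (S : vec -> Prop) (e : R) : Prop :=
  forall d : R, 0 < d -> exists s, S s /\ enorm s < e + d.

End Defs.

From mathcomp Require Import all_boot all_order all_algebra.
From mathcomp Require Import reals.
From mathcomp Require Import ring lra.
Set Implicit Arguments. Unset Strict Implicit. Unset Printing Implicit Defensive.
Import Order.TTheory GRing.Theory Num.Theory.
Local Open Scope ring_scope.

(* Strong convexity of g at y_k (towards x* and
   x_k), the descent condition and the subgradient inequality of H at
   x_{k+1}, averaged with weights alpha_k and 1 - alpha_k, give
     F(x_{k+1}) - F* + gamma_{k+1}/2 |x* - z_{k+1}|^2
       <= (1 - alpha_k) (F(x_k) - F* + gamma_k/2 |x* - z_k|^2)
          - alpha_k <v, x* - z_{k+1}>
   for a residual v with |v| <= eps_k; the cross term is absorbed by Young's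
   inequality at the price of a fraction delta of the new distance term.
   Since alpha_k^2 = eta_k gamma_{k+1} >= (gdec / Lg) mu, every alpha_k
   exceeds 1/sqrt kappa; choosing delta = (1 - c)/sqrt kappa and unrolling
   the resulting one-step recursion gives both bounds. *)

Lemma ler_of_forall_addeps (R : realFieldType) (A B M : R) :
  (forall e, 0 < e -> e <= 1 -> A <= B + e * M) -> A <= B.
Proof.
move=> H; case: (lerP M 0) => hM; first by have := H 1 ltr01 (lexx _); lra.
apply/ler_addgt0Pr => e e0; case: (lerP e M) => heM; last first.
  by have := H 1 ltr01 (lexx _); lra.
have := H (e / M); rewrite divr_gt0 // ler_pdivrMr // mul1r.
by rewrite mulrAC -mulrA divff ?mulr1 ?gt_eqF //; apply.
Qed.

(* The coordinatewise form of the estimate-sequence algebra: the difference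
   of the two sides is (1 - a) ga a mu / (2 ga1) (zk - y)^2. *)
Lemma estimate_sequence_coord (R : realFieldType)
    (a et ga ga1 mu xs xk zk xp gr s v y zp : R) :
  0 < a -> a <= 1 -> 0 < et -> 0 <= ga -> 0 <= mu ->
  ga1 = a ^+ 2 / et -> ga1 = (1 - a) * ga + a * mu ->
  y = (a * ga + ga1)^-1 * (a * ga * zk + ga1 * xk) ->
  zp = xk + a^-1 * (xp - xk) ->
  v = gr + et^-1 * (xp - y) + s ->
  gr * (xp - y) + 1 / (2 * et) * ((xp - y) * (xp - y))
    - a * (s * (xs - xp)) - (1 - a) * (s * (xk - xp))
    - a * (gr * (xs - y)) - (1 - a) * (gr * (xk - y))
    - a * mu / 2 * ((xs - y) * (xs - y))
  <= (1 - a) * (ga / 2) * ((xs - zk) * (xs - zk))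
     - ga1 / 2 * ((xs - zp) * (xs - zp)) - a * (v * (xs - zp)).
Proof.
move=> a0 a1 e0 g0 m0 hg1 hg2 hy hzp hv.
have g1p : 0 < ga1 by rewrite hg1 divr_gt0 // exprn_gt0.
have hmu : mu = (ga1 - (1 - a) * ga) / a by rewrite hg2; field; lra.
rewrite -subr_ge0.
set lhs := (X in 0 <= X).
have -> : lhs = (1 - a) * ga * (a * mu) / (2 * ga1) * ((zk - y) * (zk - y)).
  rewrite /lhs hv hzp hy hmu hg1; field; rewrite !gt_eqF //.
  have : 0 <= a * ga * et by rewrite !mulr_ge0 // ltW.
  have : 0 < a ^+ 2 by rewrite exprn_gt0.
  lra.
apply: mulr_ge0; last by rewrite -expr2 sqr_ge0.
by apply: divr_ge0; [apply: mulr_ge0; [apply: mulr_ge0|]|]; nra.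
Qed.

Section Euclidean.
Variables (R : realType) (n : nat).
Local Notation vec := 'rV[R]_n.

Lemma dotvv_ge0 (u : vec) : 0 <= dot u u.
Proof. by apply: sumr_ge0 => i _; rewrite -expr2 sqr_ge0. Qed.

Lemma enorm_ge0 (u : vec) : 0 <= enorm u.
Proof. exact: sqrtr_ge0. Qed.

Lemma enorm_sqr (u : vec) : enorm u ^+ 2 = dot u u.
Proof. by rewrite /enorm sqr_sqrtr // dotvv_ge0. Qed.

Lemma dotZr (u v : vec) t : dot u (t *: v) = t * dot u v.
Proof. by rewrite /dot mulr_sumr; apply: eq_bigr => i _; rewrite mxE; ring. Qed.

Lemma enormZ (u : vec) t : 0 <= t -> enorm (t *: u) = t * enorm u.
Proof.
move=> t0; rewrite /enorm; have -> : dot (t *: u) (t *: u) = t ^+ 2 * dot u u.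
  by rewrite /dot mulr_sumr; apply: eq_bigr => i _; rewrite !mxE; ring.
by rewrite sqrtrM ?sqr_ge0 // sqrtr_sqr ger0_norm.
Qed.

Lemma young_dot (v w : vec) a q : 0 < q ->
  - a * dot v w - q / 2 * enorm w ^+ 2 <= a ^+ 2 / (2 * q) * enorm v ^+ 2.
Proof.
move=> q0; rewrite !enorm_sqr /dot !mulr_sumr -!sumrN -!big_split /=.
apply: ler_sum => i _; rewrite -subr_ge0.
set d := (X in 0 <= X).
have -> : d = (a * v ord0 i + q * w ord0 i) ^+ 2 / (2 * q).
  by rewrite /d; field; rewrite gt_eqF.
by rewrite divr_ge0 ?sqr_ge0 // ltW // mulr_gt0.
Qed.

(* Differentiate the strong convexity inequality along the segment [y, w]:
   a step t proportional to the precision e keeps the first-order remainder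
   below e |w - y|. *)
Lemma strongly_convex_gradient_lb (g : vec -> R) dg mu :
  0 <= mu -> strongly_convex mu g -> is_gradient g dg ->
  forall y w, g y + dot (dg y) (w - y) + mu / 2 * enorm (w - y) ^+ 2 <= g w.
Proof.
move=> m0 g_sc g_grad y w.
have N0 := enorm_ge0 (w - y); set N := enorm (w - y) in N0 *.
suff : dot (dg y) (w - y) <= g w - g y - mu / 2 * N ^+ 2 by lra.
apply: (@ler_of_forall_addeps _ _ _ (N + mu / 2 * N ^+ 2)) => e e0 e1.
have [d [d0 hd]] := g_grad y e e0.
have den0 : 0 < d + e * N by nra.
pose t := e * d / (d + e * N).
have t0 : 0 < t by rewrite divr_gt0 // mulr_gt0.
have te : t <= e by rewrite ler_pdivrMr //; nra.
have tN : t * N < d by rewrite /t mulrAC ltr_pdivrMr //; nra.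
have hc := g_sc w y t (introT andP (conj (ltW t0) (le_trans te e1))).
have comb : t *: w + (1 - t) *: y = y + t *: (w - y).
  by rewrite scalerBr scalerBl scale1r addrCA addrA.
rewrite comb -/N in hc.
have := hd (t *: (w - y)); rewrite enormZ ?dotZr -/N; last exact: ltW.
move=> /(_ tN) /ler_normlP [h1 h2].
have : t * dot (dg y) (w - y) <= t * (g w - g y - mu / 2 * (1 - t) * N ^+ 2 + e * N).
  by move: hc h1 h2; set T := g (y + t *: (w - y)); nra.
rewrite ler_pM2l // => h3.
have : mu / 2 * t * N ^+ 2 <= mu / 2 * e * N ^+ 2.
  by apply: ler_wpM2r; [exact: sqr_ge0 | apply: ler_wpM2l => //; lra].
lra.
Qed.

Lemma estimate_sequence_ineq (a et ga ga1 mu : R)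
    (xs xk zk xp gr s v y zp : vec) :
  0 < a -> a <= 1 -> 0 < et -> 0 <= ga -> 0 <= mu ->
  ga1 = a ^+ 2 / et -> ga1 = (1 - a) * ga + a * mu ->
  y = (a * ga + ga1)^-1 *: (a * ga *: zk + ga1 *: xk) ->
  zp = xk + a^-1 *: (xp - xk) ->
  v = gr + et^-1 *: (xp - y) + s ->
  dot gr (xp - y) + 1 / (2 * et) * enorm (xp - y) ^+ 2
    - a * dot s (xs - xp) - (1 - a) * dot s (xk - xp)
    - a * dot gr (xs - y) - (1 - a) * dot gr (xk - y)
    - a * mu / 2 * enorm (xs - y) ^+ 2
  <= (1 - a) * (ga / 2) * enorm (xs - zk) ^+ 2
     - ga1 / 2 * enorm (xs - zp) ^+ 2 - a * dot v (xs - zp).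
Proof.
move=> a0 a1 e0 g0 m0 hg1 hg2 hy hzp hv.
rewrite !enorm_sqr /dot !mulr_sumr -!sumrN -!big_split /=.
apply: ler_sum => i _; rewrite !mxE.
by apply: estimate_sequence_coord => //;
  [rewrite hy | rewrite hzp | rewrite hv]; rewrite !mxE.
Qed.

End Euclidean.

Section InexactAPG.
Variables (R : realType) (n : nat).
Local Notation vec := 'rV[R]_n.
Variables (F g H : vec -> R) (D : vec -> Prop) (dg : vec -> vec).
Variables (mu Lg gdec Lund : R) (xstar : vec).
Variables (x z y : nat -> vec) (eta alpha gamma eps : nat -> R).

Hypothesis F_def : forall u, F u = g u + H u.
Hypothesis mu_gt0 : 0 < mu.
Hypothesis g_sc : strongly_convex mu g.
Hypothesis g_grad : is_gradient g dg.
Hypothesis Lg_gt0 : 0 < Lg.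
Hypothesis gdec_gt0 : 0 < gdec.
Hypothesis Lund_gt0 : 0 < Lund.
Hypothesis mu_le_Lund : mu <= Lund.
Hypothesis xstar_in : D xstar.
Hypothesis xstar_min : forall u, D u -> F xstar <= F u.
Hypothesis eta_gt0 : forall k, 0 < eta k.
Hypothesis alpha_gt0 : forall k, 0 < alpha k.
Hypothesis gamma_gt0 : forall k, 0 < gamma k.
Hypothesis eta_bounds : forall k, gdec / Lg < eta k <= 1 / Lund.
Hypothesis gamma_succ : forall k, gamma k.+1 = alpha k ^+ 2 / eta k.
Hypothesis gamma_succE :
  forall k, alpha k ^+ 2 / eta k = (1 - alpha k) * gamma k + alpha k * mu.
Hypothesis mu_le_gamma0 : mu <= gamma 0%N.
Hypothesis x0_in : D (x 0%N).
Hypothesis y_def : forall k, y k = (alpha k * gamma k + gamma k.+1)^-1 *: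
  (alpha k * gamma k *: z k + gamma k.+1 *: x k).
Hypothesis z_def : forall k, z k.+1 = x k + (alpha k)^-1 *: (x k.+1 - x k).
Hypothesis prox_inexact : forall k, dist0_le
  (fun u => exists s, subdiff D H (x k.+1) s /\
     u = dg (y k) + (eta k)^-1 *: (x k.+1 - y k) + s) (eps k).
Hypothesis descent : forall k, g (x k.+1) <= g (y k)
  + dot (dg (y k)) (x k.+1 - y k) + 1 / (2 * eta k) * enorm (x k.+1 - y k) ^+ 2.

Let kappa := Lg / (gdec * mu).
Let rate := Num.sqrt (1 / kappa).
Let gap k := F (x k) - F xstar.
Let dist2 k := gamma k / 2 * enorm (xstar - z k) ^+ 2.

Lemma eta_Lund_le1 k : eta k * Lund <= 1.
Proof. by have /andP[_] := eta_bounds k; rewrite ler_pdivlMr. Qed.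

Lemma alpha_le1 k : alpha k <= 1.
Proof.
have e0 := eta_gt0 k; have a0 := alpha_gt0 k; have g0 := gamma_gt0 k.
have ha2 : alpha k ^+ 2 = eta k * ((1 - alpha k) * gamma k + alpha k * mu).
  by rewrite -gamma_succE mulrC mulfVK // gt_eqF.
have hem : eta k * mu <= 1.
  exact: le_trans (ler_wpM2l (ltW e0) mu_le_Lund) (eta_Lund_le1 k).
have h2 : eta k * (alpha k * mu) <= alpha k by nra.
rewrite leNgt; apply/negP => hgt.
have : eta k * ((1 - alpha k) * gamma k) <= 0.
  by rewrite pmulr_rle0 // nmulr_rle0 //; lra.
nra.
Qed.

Lemma mu_le_gamma k : mu <= gamma k.
Proof.
elim: k => [//|k IH]; have := alpha_le1 k; have := alpha_gt0 k.
rewrite gamma_succ gamma_succE; nra.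
Qed.

Lemma rate_lt_alpha k : rate < alpha k.
Proof.
have e0 := eta_gt0 k; have a0 := alpha_gt0 k.
have ha2 : alpha k ^+ 2 = eta k * gamma k.+1.
  by rewrite gamma_succ mulrC mulfVK // gt_eqF.
have hk : 1 / kappa = gdec / Lg * mu.
  by rewrite /kappa; field; rewrite !gt_eqF.
have : 1 / kappa < alpha k ^+ 2.
  rewrite hk ha2; apply: (@lt_le_trans _ _ (eta k * mu)).
    by rewrite ltr_pM2r //; case/andP: (eta_bounds k).
  by rewrite ler_pM2l // mu_le_gamma.
by rewrite -ltr_sqrt ?exprn_gt0 // sqrtr_sqr gtr0_norm.
Qed.

Lemma rate_gt0 : 0 < rate.
Proof. by rewrite sqrtr_gt0 divr_gt0 // divr_gt0 // mulr_gt0. Qed.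

Lemma x_in k : D (x k).
Proof. by case: k => // k; have [_ [[s [[Dx _] _]] _]] := prox_inexact k ltr01. Qed.

Lemma gap_ge0 k : 0 <= gap k.
Proof. by rewrite subr_ge0 xstar_min //; exact: x_in. Qed.

Lemma dist2_ge0 k : 0 <= dist2 k.
Proof. by rewrite mulr_ge0 ?sqr_ge0 // divr_ge0 // ltW. Qed.

Lemma one_step_residual k d : 0 < d -> exists v, enorm v < eps k + d /\
  gap k.+1 + dist2 k.+1 <= (1 - alpha k) * (gap k + dist2 k)
                           - alpha k * dot v (xstar - z k.+1).
Proof.
move=> d0; have [u [[s [[_ H_sub] u_def]] u_lt]] := prox_inexact k d0.
exists u; split => //.
have a0 := alpha_gt0 k; have a1 := alpha_le1 k.
have := estimate_sequence_ineq xstar a0 a1 (eta_gt0 k)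
  (ltW (gamma_gt0 k)) (ltW mu_gt0) (gamma_succ k)
  (etrans (gamma_succ k) (gamma_succE k)) (y_def k) (z_def k) u_def.
have a1' : 0 <= 1 - alpha k by lra.
have := ler_wpM2l (ltW a0) (H_sub _ xstar_in).
have := ler_wpM2l a1' (H_sub _ (x_in k)).
have lb := strongly_convex_gradient_lb (ltW mu_gt0) g_sc g_grad (y k).
have := ler_wpM2l (ltW a0) (lb xstar); have := ler_wpM2l a1' (lb (x k)).
have : 0 <= (1 - alpha k) * (mu / 2 * enorm (x k - y k) ^+ 2).
  by rewrite mulr_ge0 // mulr_ge0 ?sqr_ge0 // divr_ge0 // ltW.
have := descent k.
rewrite /gap /dist2 !F_def; lra.
Qed.

Lemma one_step_young k dl : 0 < dl -> dl <= 1 ->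
  gap k.+1 + (1 - dl) * dist2 k.+1 <=
    (1 - alpha k) * (gap k + dist2 k) + eta k / (2 * dl) * eps k ^+ 2.
Proof.
move=> dl0 dl1; have e0 := eta_gt0 k.
apply: (@ler_of_forall_addeps _ _ _ (eta k / (2 * dl) * (2 * eps k + 1))).
move=> e e0' e1; have [v [v_lt hk]] := one_step_residual k e0'.
have g10 := gamma_gt0 k.+1.
have := young_dot v (xstar - z k.+1) (alpha k) (mulr_gt0 dl0 g10).
have -> : alpha k ^+ 2 / (2 * (dl * gamma k.+1)) = eta k / (2 * dl).
  by rewrite gamma_succ; field; rewrite !gt_eqF.
have nv : enorm v ^+ 2 <= eps k ^+ 2 + e * (2 * eps k + 1).
  have v0 := enorm_ge0 v.
  have : enorm v * enorm v <= (eps k + e) * (eps k + e) by apply: ler_pM; lra.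
  have : e * e <= e by rewrite -[leRHS]mulr1 ler_pM2l.
  rewrite !expr2; lra.
have := ler_wpM2l (ltW (divr_gt0 e0 (mulr_gt0 (ltr0Sn _ 1%N) dl0))) nv.
move: hk; rewrite /dist2; lra.
Qed.

Lemma exact_one_step k : eps k = 0 ->
  gap k.+1 + dist2 k.+1 <= (1 - rate) * (gap k + dist2 k).
Proof.
move=> eps0; apply: le_trans (_ : _ <= (1 - alpha k) * (gap k + dist2 k)) _.
  apply: (@ler_of_forall_addeps _ _ _ (dist2 k.+1)) => e e0 e1.
  by have := one_step_young k e0 e1; rewrite eps0 expr0n mulr0 addr0; lra.
apply: ler_wpM2r; first by rewrite addr_ge0 ?gap_ge0 ?dist2_ge0.
by have := rate_lt_alpha k; lra.
Qed.

Lemma exact_linear_rate : (forall k, eps k = 0) ->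
  forall k, gap k + dist2 k <= (1 - rate) ^+ k * (gap 0%N + dist2 0%N).
Proof.
move=> eps0; elim=> [|k IH]; first by rewrite expr0 mul1r.
apply: le_trans (exact_one_step (eps0 k)) _.
have : 0 <= 1 - rate by have := rate_lt_alpha 0%N; have := alpha_le1 0%N; lra.
by move/ler_wpM2l => /(_ _ _ IH); rewrite exprS mulrA.
Qed.

Section Potential.
Variable c : R.
Hypotheses (c_ge0 : 0 <= c) (c_lt1 : c < 1).

Let psi k := gap k + (1 - (1 - c) * alpha k) * (gamma k / 2) * enorm (xstar - z k) ^+ 2.
Let C := Num.sqrt kappa / (2 * (1 - c) ^+ 2 * Lund).
Let P k := \prod_(j < k) (1 - c * alpha j).

Lemma contraction_gt0 j : 0 < 1 - c * alpha j.
Proof. by have := c_lt1; have := alpha_le1 j; have := alpha_gt0 j; nra. Qed.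

(* Young's inequality is used with delta = (1 - c) rate; rate = 1/sqrt kappa
   turns its constant eta_k / (2 delta) into eta_k Lund (1 - c) C, and
   eta_k Lund <= 1. *)
Lemma psi_step k : psi k.+1 <= (1 - c * alpha k) * (psi k + C * eps k ^+ 2).
Proof.
have r0 := rate_gt0; have ak0 := alpha_gt0 k; have ak1 := alpha_le1 k.
have c0 := c_ge0; have c' : 0 < 1 - c by rewrite subr_gt0.
have dl0 : 0 < (1 - c) * rate by rewrite mulr_gt0.
have dl1 : (1 - c) * rate <= 1 by have := rate_lt_alpha k; nra.
have st := one_step_young k dl0 dl1.
have psiE j : psi j = gap j + (1 - (1 - c) * alpha j) * dist2 j.
  by rewrite /psi /dist2 -mulrA.
have hb1 := dist2_ge0 k.+1; have hb0 := dist2_ge0 k; have ha := gap_ge0 k.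
have hs1 := rate_lt_alpha k.+1.
have p1 : 0 <= ((1 - c) * alpha k.+1 - (1 - c) * rate) * dist2 k.+1.
  by apply: mulr_ge0 => //; nra.
have p2 : 0 <= (1 - c) * alpha k * gap k by apply: mulr_ge0 => //; nra.
have p3 : 0 <= c * (1 - c) * alpha k ^+ 2 * dist2 k.
  by apply: mulr_ge0 => //; apply: mulr_ge0; [nra | exact: sqr_ge0].
have p4 : eta k / (2 * ((1 - c) * rate)) * eps k ^+ 2 <=
          (1 - c * alpha k) * C * eps k ^+ 2.
  apply: ler_wpM2r; first exact: sqr_ge0.
  have sK : Num.sqrt kappa = rate^-1.
    rewrite /rate div1r sqrtrV ?invrK //.
    by apply: divr_ge0; [exact: ltW | apply: mulr_ge0; exact: ltW].
  pose W := (2 * (1 - c) ^+ 2 * Lund * rate)^-1.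
  have W0 : 0 < W by rewrite invr_gt0 !mulr_gt0 // exprn_gt0.
  have -> : eta k / (2 * ((1 - c) * rate)) = eta k * Lund * (1 - c) * W.
    by rewrite /W; field; rewrite !gt_eqF.
  have -> : (1 - c * alpha k) * C = (1 - c * alpha k) * W.
    by rewrite /C /W sK; field; rewrite !gt_eqF.
  by apply: ler_wpM2r; [exact: ltW | have := eta_Lund_le1 k; nra].
rewrite !psiE; lra.
Qed.

Lemma psi_bound k :
  psi k <= P k * (psi 0%N + C * \sum_(t < k) (eps t ^+ 2 / P t)).
Proof.
elim: k => [|k IH]; first by rewrite /P !big_ord0 mul1r mulr0 addr0.
rewrite /P !big_ord_recr /= -/(P k).
apply: le_trans (psi_step k) _.
have cP := contraction_gt0 k.
have Pk : 0 < P k by apply: prodr_gt0 => j _; exact: contraction_gt0.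
apply: le_trans (ler_wpM2l (ltW cP) (lerD IH (lexx (C * eps k ^+ 2)))) _.
by rewrite le_eqVlt; apply/orP; left; apply/eqP; field; rewrite gt_eqF.
Qed.

End Potential.

End InexactAPG.

Theorem theorem3p5 (R : realType) (n : nat)
  (g h r : 'rV[R]_n -> R) (D : 'rV[R]_n -> Prop)
  (dg dh : 'rV[R]_n -> 'rV[R]_n)
  (mu Lg Lh gdec Lund : R) (xstar : 'rV[R]_n)
  (x z y : nat -> 'rV[R]_n) (eta alpha gamma eps : nat -> R) :
  (* g : convex, mu-strongly convex, differentiable, Lg-Lipschitz gradient *)
  0 <= mu -> strongly_convex mu g -> is_gradient g dg -> 0 < Lg -> lipschitz Lg dg ->
  (* h : convex, differentiable, Lh-Lipschitz gradient *)
  strongly_convex 0 h -> is_gradient h dh -> 0 <= Lh -> lipschitz Lh dh ->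
  (* r : proper closed convex, r = +oo outside D *)
  proper_closed_convex D r ->
  (* F = g + h + r attains its minimum F* at xstar *)
  D xstar -> (forall u, D u -> g xstar + h xstar + r xstar <= g u + h u + r u) ->
  (* constants *)
  0 < gdec < 1 -> 0 < Lund -> mu <= Lund -> Lund <= Lg ->
  (* iAPG iterates *)
  (forall k, 0 < eta k /\ 0 < alpha k /\ 0 < gamma k /\ 0 <= eps k) ->
  x 0%N = z 0%N -> D (x 0%N) -> mu <= gamma 0%N ->
  (forall k, gdec / Lg < eta k <= 1 / Lund) ->
  (forall k, gamma k.+1 = alpha k ^+ 2 / eta k /\
             alpha k ^+ 2 / eta k = (1 - alpha k) * gamma k + alpha k * mu) ->
  (forall k, y k = (alpha k * gamma k + gamma k.+1)^-1 *:
                   (alpha k * gamma k *: z k + gamma k.+1 *: x k)) ->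
  (forall k, dist0_le
      (fun u => exists s, subdiff D (fun v => h v + r v) (x k.+1) s /\
                u = dg (y k) + (eta k)^-1 *: (x k.+1 - y k) + s) (eps k)) ->
  (forall k, g (x k.+1) <= g (y k) + dot (dg (y k)) (x k.+1 - y k)
                          + 1 / (2 * eta k) * enorm (x k.+1 - y k) ^+ 2) ->
  (forall k, z k.+1 = x k + (alpha k)^-1 *: (x k.+1 - x k)) ->
  (* conclusions, for mu > 0 *)
  0 < mu ->
  let F := fun u => g u + h u + r u in
  let Fstar := F xstar in
  let kappa := Lg / (gdec * mu) in
  (forall c : R, 0 <= c < 1 ->
    let psi := fun k => F (x k) - Fstar
                 + (1 - (1 - c) * alpha k) * (gamma k / 2) * enorm (xstar - z k) ^+ 2 in
    forall k : nat,
      psi k.+1 <= (\prod_(j < k.+1) (1 - c * alpha j)) *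
        (psi 0%N + Num.sqrt kappa / (2 * (1 - c) ^+ 2 * Lund) *
           \sum_(t < k.+1) (eps t ^+ 2 / \prod_(j < t) (1 - c * alpha j)))) /\
  ((forall k, eps k = 0) ->
    forall k : nat,
      F (x k.+1) - Fstar + gamma k.+1 / 2 * enorm (xstar - z k.+1) ^+ 2 <=
        (1 - Num.sqrt (1 / kappa)) ^+ k.+1 *
        (F (x 0%N) - Fstar + gamma 0%N / 2 * enorm (xstar - z 0%N) ^+ 2)).
Proof.
move=> _ g_sc g_grad Lg0 _ _ _ _ _ _ xs_in xs_min /andP[gdec0 _] Lund0 muL _
  pos _ x0_in mu_g0 eta_b gam y_def prox desc z_def mu0 F Fstar kappa.
have F_def u : F u = g u + (h u + r u) by rewrite /F addrA.
have eta0 k : 0 < eta k := (pos k).1.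
have alpha0 k : 0 < alpha k := (pos k).2.1.
have gamma0 k : 0 < gamma k := (pos k).2.2.1.
have gam1 k : gamma k.+1 = alpha k ^+ 2 / eta k := (gam k).1.
have gam2 k := (gam k).2.
split=> [c /andP[c0 c1] psi k | eps0 k].
  exact: (psi_bound F_def mu0 g_sc g_grad Lg0 gdec0 Lund0 muL xs_in xs_min
    eta0 alpha0 gamma0 eta_b gam1 gam2 mu_g0 x0_in y_def z_def prox desc c0 c1).
exact: (exact_linear_rate F_def mu0 g_sc g_grad Lg0 gdec0 Lund0 muL xs_in xs_min
  eta0 alpha0 gamma0 eta_b gam1 gam2 mu_g0 x0_in y_def z_def prox desc eps0).
Qed.
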